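(* Fix $t,\kappa>0$, $r>0$, $\eta\ge 8qr/t$ and $R>\max(2\eta t/q,3\kappa)$. Suppose the potential satisfies: (A) there exists a site $x\in L_T(0,r)$ with $\xi_T(x)\in[\eta,2\eta)$; (B) for all $y\in L_T(0,R)\setminus\{x\}$, $\xi_T(y)\le\eta/2$; (C) $\max_{z\in L_T(0,r)}h_T(z)\le t/8$. Then for $T$ sufficiently large, for $z\in L_T$ with $h_T(z)\le t$, \[m_T(z,t)=m_T(x,t)-q|z-x|=\xi_T(x)(t-h_T(x))-q|z-x|,\] and otherwise $m_T(z,t)=0$. In particular, $x$ is the unique maximizer of $m_T(\cdot,t)$.
   Context: $(\xi(z))_{z\in\mathbb{Z}^d}$ is a (Pareto) potential, $\alpha>d$, $q=d/(\alpha-d)$, $a(T)=(T/\log T)^q$, $r(T)=(T/\log T)^{q+1}$. $|\cdot|$ is the $\ell_1$-norm, $B(z,R)$ the open $\ell_1$-ball. $L_T=\{z\in\mathbb{R}^d:r(T)z\in\mathbb{Z}^d\}$, $L_T(z,R)=L_T\cap B(z,R)$, $\xi_T(z)=\xi(r(T)z)/a(T)$ for $z\in L_T$. For $z\in L_T$, \[h_T(z)=\inf\Big\{\sum_{j=1}^n q\frac{|y_{j-1}-y_j|}{\xi_T(y_j)}: n\ge0,\ y_0,\dots,y_n\in L_T,\ y_0=z,\ y_n=0\Big\},\] and $m_T(z,t)=\sup_{y\in L_T}\{\xi_T(y)(t-h_T(y))_+-q|z-y|\}$. *)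

From HB Require Import structures.
From mathcomp Require Import all_boot all_order all_algebra.
From mathcomp Require Import all_classical all_reals all_analysis.
Import Order.TTheory GRing.Theory Num.Theory.
Local Open Scope ring_scope.
Local Open Scope classical_set_scope.

Section Defs.
Context {R : realType} {d : nat}.

Definition l1norm (z : 'I_d -> R) : R := \sum_(i < d) `|z i|.

Definition qexp (alpha : R) : R := d%:R / (alpha - d%:R).

Definition aT (alpha T : R) : R := (T / ln T) `^ qexp alpha.
Definition rT (alpha T : R) : R := (T / ln T) `^ (qexp alpha + 1).

Definition inLT (alpha T : R) (z : 'I_d -> R) : Prop :=
  forall i, rT alpha T * z i \is a Num.int.

(* xi_T(z) = xi(r(T) z) / a(T)  (for z in L_T, r(T) z is an integer vector,
   recovered exactly by the floor) *)
Definition xiT (xi : ('I_d -> int) -> R) (alpha T : R) (z : 'I_d -> R) : R :=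
  xi (fun i => Num.floor (rT alpha T * z i)) / aT alpha T.

Definition hT (xi : ('I_d -> int) -> R) (alpha T : R) (z : 'I_d -> R) : R :=
  inf [set s : R | exists (n : nat) (y : nat -> 'I_d -> R),
         (forall j, (j <= n)%N -> inLT alpha T (y j)) /\
         y 0%N = z /\ y n = (fun _ => 0) /\
         s = \sum_(1 <= j < n.+1)
               qexp alpha * l1norm (fun i => y j.-1 i - y j i)
                 / xiT xi alpha T (y j)].

Definition mT (xi : ('I_d -> int) -> R) (alpha T : R) (z : 'I_d -> R) (t : R) : R :=
  sup [set v : R | exists y : 'I_d -> R, inLT alpha T y /\
         v = xiT xi alpha T y * Num.max (t - hT xi alpha T y) 0
             - qexp alpha * l1norm (fun i => z i - y i)].

End Defs.
Arguments qexp {R} d alpha.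

From HB Require Import structures.
From mathcomp Require Import all_boot all_order all_algebra.
From mathcomp Require Import all_classical all_reals all_analysis.
From mathcomp Require Import lra.
Import Order.TTheory GRing.Theory Num.Theory.
Local Open Scope ring_scope.
Local Open Scope classical_set_scope.

(* Since h_T is an infimum of path costs, it dominates every F with F(0) <= 0
   and F(a) <= c(a,b) + max(F(b), h_T(b)), where c(a,b) = q|a - b|/xi_T(b) is
   the cost of one step.  Two such subsolutions, built from (B), show that
   every site y with h_T(y) <= t lies in the ball of radius R and satisfies
   either h_T(y) >= q|y - x|/xi_T(x) + h_T(x) (it is reached through x) or
   h_T(y) >= 2q|y|/eta.  Either way the candidate y contributes less than x to
   the supremum defining m_T, because xi_T(y) <= eta/2 while xi_T(x) >= eta. *)

Lemma sup_eq_max (R : realType) (E : set R) (M : R) :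
  E M -> (forall v, E v -> v <= M) -> sup E = M.
Proof.
move=> EM ubM; apply/le_anti/andP; split.
  by apply: ge_sup => //; exists M.
by apply: ub_le_sup => //; exists M.
Qed.

Lemma ler_wdiv2l (R : numFieldType) (w u v : R) :
  0 <= w -> 0 < u -> u <= v -> w / v <= w / u.
Proof.
move=> w0 u0 uv; apply: ler_wpM2l => //.
by rewrite lef_pV2 // posrE (lt_le_trans u0 uv).
Qed.

Section L1Norm.
Context {R : realType} {d : nat}.
Implicit Types a b c : 'I_d -> R.

Definition origin : 'I_d -> R := fun _ => 0.

Lemma l1norm_ge0 a : 0 <= l1norm a.
Proof. by rewrite sumr_ge0. Qed.

Lemma l1norm_origin : l1norm origin = 0.
Proof. by rewrite /l1norm big1 // => i _; rewrite normr0. Qed.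

Lemma l1norm_subr0 a : l1norm (fun i => a i - origin i) = l1norm a.
Proof. by apply: eq_bigr => i _; rewrite subr0. Qed.

Lemma l1norm_sub0r a : l1norm (fun i => origin i - a i) = l1norm a.
Proof. by apply: eq_bigr => i _; rewrite sub0r normrN. Qed.

Lemma l1norm_distC a b :
  l1norm (fun i => a i - b i) = l1norm (fun i => b i - a i).
Proof. by apply: eq_bigr => i _; rewrite distrC. Qed.

Lemma l1norm_distxx a : l1norm (fun i => a i - a i) = 0.
Proof. by rewrite /l1norm big1 // => i _; rewrite subrr normr0. Qed.

Lemma l1norm_dist_triangle a b c :
  l1norm (fun i => a i - c i) <=
  l1norm (fun i => a i - b i) + l1norm (fun i => b i - c i).
Proof.
rewrite /l1norm -big_split /=; apply: ler_sum => i _.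
by rewrite (le_trans _ (ler_normD _ _)) // addrA subrK.
Qed.

Lemma l1norm_dist_gt0 a b : a <> b -> 0 < l1norm (fun i => a i - b i).
Proof.
move=> ab; have [i abi] : exists i, a i != b i.
  apply: contra_notP ab => eq_ab; apply/funext => i; apply/eqP.
  by apply/negPn/negP => abi; apply: eq_ab; exists i.
rewrite /l1norm (bigD1 i) //=; apply: ltr_pwDl.
  by rewrite normr_gt0 subr_eq0.
by rewrite sumr_ge0.
Qed.

End L1Norm.

Section PathCost.
Variables (R : realType) (d : nat) (alpha T : R) (xi : ('I_d -> int) -> R).
Hypotheses (q_gt0 : 0 < qexp d alpha) (aT_gt0 : 0 < @aT R d alpha T)
  (xi_ge1 : forall z, 1 <= xi z).
Implicit Types (a b y z : 'I_d -> R) (p : nat -> 'I_d -> R).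

Local Notation L := (inLT alpha T).
Local Notation X := (xiT xi alpha T).
Local Notation h := (hT xi alpha T).
Local Notation q := (qexp d alpha).

Definition step_cost a b := q * l1norm (fun i => a i - b i) / X b.

Definition path_cost p n := \sum_(1 <= j < n.+1) step_cost (p j.-1) (p j).

Definition path_costs z := [set s | exists n p,
  (forall j, (j <= n)%N -> L (p j)) /\
  p 0%N = z /\ p n = origin /\ s = path_cost p n].

Lemma hTE z : h z = inf (path_costs z).
Proof. by []. Qed.

Lemma xiT_gt0 y : 0 < X y.
Proof. by rewrite divr_gt0 // (lt_le_trans ltr01). Qed.

Lemma ql1norm_ge0 a : 0 <= q * l1norm a.
Proof. by rewrite mulr_ge0 ?l1norm_ge0 ?ltW. Qed.

Lemma qdist_triangle a b c :
  q * l1norm (fun i => a i - c i) <=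
  q * l1norm (fun i => a i - b i) + q * l1norm (fun i => b i - c i).
Proof. by rewrite -mulrDr ler_pM2l // l1norm_dist_triangle. Qed.

Lemma qdist_div_triangle a b c {u : R} : 0 < u ->
  q * l1norm (fun i => a i - c i) / u <=
  q * l1norm (fun i => a i - b i) / u + q * l1norm (fun i => b i - c i) / u.
Proof. by move=> u0; rewrite -mulrDl ler_pM2r ?invr_gt0 // qdist_triangle. Qed.

Lemma step_cost_ge0 a b : 0 <= step_cost a b.
Proof. by rewrite divr_ge0 ?ql1norm_ge0 ?ltW ?xiT_gt0. Qed.

Lemma path_cost_ge0 p n : 0 <= path_cost p n.
Proof. by rewrite sumr_ge0 // => j _; exact: step_cost_ge0. Qed.

Lemma path_costS p n :
  path_cost p n.+1 = step_cost (p 0%N) (p 1%N) + path_cost (fun j => p j.+1) n.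
Proof.
rewrite /path_cost big_nat_recl //=; congr (_ + _).
by apply: eq_big_nat => j /andP[j_gt0 _]; rewrite prednK.
Qed.

Lemma inLT_origin : L (@origin R d).
Proof. by move=> i; rewrite mulr0 rpred0. Qed.

Lemma path_costs_neq0 z : L z -> path_costs z !=set0.
Proof.
move=> Lz; pose p j := if j == 0%N then z else origin.
exists (path_cost p 1), 1%N, p; split => //.
by move=> [|j] _ //=; exact: inLT_origin.
Qed.

Lemma path_costs_lbound z : has_lbound (path_costs z).
Proof. by exists 0 => s [n [p [_ [_ [_ ->]]]]]; exact: path_cost_ge0. Qed.

Lemma hT_le_path_cost z s : path_costs z s -> h z <= s.
Proof. by move=> zs; rewrite hTE; apply: ge_inf => //; apply: path_costs_lbound. Qed.

Lemma hT_le_step z y : L z -> L y -> h z <= step_cost z y + h y.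
Proof.
move=> Lz Ly; rewrite -lerBlDl [h y]hTE.
apply: lb_le_inf; first exact: path_costs_neq0.
move=> s [n [p [Lp [p0 [pn ->]]]]]; rewrite lerBlDl; apply: hT_le_path_cost.
exists n.+1, (fun j => if j == 0%N then z else p j.-1); split.
  by move=> [|j] //= jn; apply: Lp.
by rewrite path_costS /= p0.
Qed.

Lemma mT_eq0 z t : L z -> t < h z -> mT xi alpha T z t = 0.
Proof.
move=> Lz hz; apply: sup_eq_max.
  exists z; split => //.
  by rewrite (max_idPr _) ?l1norm_distxx ?mulr0 ?subr0 // subr_le0 ltW.
move=> _ [y [Ly ->]]; rewrite subr_le0.
have [hy|ty] := ltP (h y) t; last by rewrite (max_idPr _) ?mulr0 ?ql1norm_ge0 ?subr_le0.
rewrite (max_idPl _); last by rewrite subr_ge0 ltW.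
have Xy_gt0 := xiT_gt0 y.
have -> : q * l1norm (fun i => z i - y i) = X y * step_cost z y.
  by rewrite [X y * _]mulrC divfK ?gt_eqF.
rewrite ler_pM2l // lerBlDr.
exact: le_trans (ltW hz) (hT_le_step z y Lz Ly).
Qed.

Section Subsolution.
Variable F : ('I_d -> R) -> R.
(* The alternative [h b] lets a subsolution fall back on h itself at chosen
   sites, such as the peak x. *)
Hypotheses (F_origin : F origin <= 0)
  (F_step : forall a b, L a -> L b -> F a <= step_cost a b + Num.max (F b) (h b)).

Lemma subsolution_le_path_cost n p : (forall j, (j <= n)%N -> L (p j)) ->
  p n = origin -> F (p 0%N) <= path_cost p n.
Proof.
elim: n p => [|n IHn] p Lp pn; first by rewrite /path_cost big_geq // pn.
rewrite path_costS; apply: (le_trans (F_step _ _ (Lp 0%N isT) (Lp 1%N isT))).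
have Lp' j : (j <= n)%N -> L (p j.+1) by move=> jn; apply: Lp.
rewrite lerD2l ge_max; apply/andP; split; first exact: IHn.
by apply: hT_le_path_cost; exists n, (fun j => p j.+1).
Qed.

Lemma subsolution_le_hT z : L z -> F z <= h z.
Proof.
move=> Lz; rewrite hTE; apply: lb_le_inf; first exact: path_costs_neq0.
by move=> s [n [p [Lp [<- [pn ->]]]]]; exact: subsolution_le_path_cost.
Qed.

End Subsolution.

Section IsolatedPeak.
Variables (x : 'I_d -> R) (eta Rad : R).
Hypotheses (Lx : L x) (eta_gt0 : 0 < eta)
  (xi_x_ge : eta <= X x) (xi_x_lt : X x < 2 * eta)
  (xi_ball_le : forall y, L y -> l1norm y < Rad -> y <> x -> X y <= eta / 2).

Definition hT_cap := q * Rad / (2 * eta).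

Definition ball_bound a := Num.min (q * l1norm a / (2 * eta)) hT_cap.

Definition peak_bound a :=
  Num.min (Num.min (q * l1norm (fun i => a i - x i) / X x + h x)
                   (q * l1norm a / (eta / 2))) hT_cap.

Lemma hT_cap_le_far {a} : Rad <= l1norm a -> hT_cap <= q * l1norm a / (2 * eta).
Proof. by move=> Ra; rewrite ler_pM2r ?invr_gt0 ?mulr_gt0 // ler_pM2l. Qed.

Lemma hT_cap_le_ball_bound {a} : Rad <= l1norm a -> hT_cap <= ball_bound a.
Proof. by move=> Ra; rewrite le_min (hT_cap_le_far Ra) lexx. Qed.

Lemma ball_bound_le_hT z : L z -> ball_bound z <= h z.
Proof.
have eta2_gt0 : 0 < 2 * eta by rewrite mulr_gt0.
apply: subsolution_le_hT => [|a b La Lb].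
  by rewrite /ball_bound l1norm_origin mulr0 mul0r ge_min lexx.
apply: (@le_trans _ _ (step_cost a b + ball_bound b)); last by rewrite lerD2l le_max lexx.
case: (ltP (l1norm b) Rad) => Rb; last first.
  have cap_le_b := hT_cap_le_ball_bound Rb.
  have a_le_cap : ball_bound a <= hT_cap by rewrite ge_min lexx orbT.
  by have := step_cost_ge0 a b; lra.
have Xb : X b <= 2 * eta.
  have [->|bx] := pselect (b = x); first exact: ltW.
  by have := xi_ball_le b Lb Rb bx; lra.
rewrite /ball_bound addrC addr_minl le_min2 ?lerDl ?step_cost_ge0 //.
have := qdist_div_triangle a b origin eta2_gt0.
rewrite !l1norm_subr0 /step_cost => /le_trans; apply.
by rewrite [leLHS]addrC lerD2l ler_wdiv2l ?ql1norm_ge0 ?xiT_gt0.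
Qed.

Lemma peak_bound_le_hT z : L z -> peak_bound z <= h z.
Proof.
have eta2_gt0 : 0 < eta / 2 by rewrite divr_gt0.
apply: subsolution_le_hT => [|a b La Lb].
  by rewrite /peak_bound l1norm_origin mulr0 mul0r !ge_min lexx orbT.
have [->|bx] := pselect (b = x).
  apply: (@le_trans _ _ (step_cost a x + h x)); last by rewrite lerD2l le_max lexx orbT.
  by rewrite /peak_bound !ge_min /step_cost lexx.
apply: (@le_trans _ _ (step_cost a b + peak_bound b)); last by rewrite lerD2l le_max lexx.
case: (ltP (l1norm b) Rad) => Rb; last first.
  have cap_le_hb : hT_cap <= h b.
    exact: le_trans (hT_cap_le_ball_bound Rb) (ball_bound_le_hT b Lb).
  have cap_le_b : hT_cap <= peak_bound b.
    rewrite !le_min lexx andbT; apply/andP; split.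
      by apply: (le_trans cap_le_hb); apply: hT_le_step.
    apply: (le_trans (hT_cap_le_far Rb)); rewrite ler_wdiv2l ?ql1norm_ge0 //.
    lra.
  have a_le_cap : peak_bound a <= hT_cap by rewrite ge_min lexx orbT.
  by have := step_cost_ge0 a b; lra.
have Xb := xi_ball_le b Lb Rb bx.
rewrite addrC /peak_bound !addr_minl le_min2 ?lerDl ?step_cost_ge0 //.
apply: le_min2.
  rewrite -addrA [h x + _]addrC addrA lerD2r.
  apply: (le_trans (qdist_div_triangle a b x (xiT_gt0 x))).
  rewrite [leLHS]addrC lerD2l ler_wdiv2l ?ql1norm_ge0 ?xiT_gt0 //.
  by apply: (le_trans Xb); apply: le_trans xi_x_ge; lra.
have := qdist_div_triangle a b origin eta2_gt0.
rewrite !l1norm_subr0 /step_cost => /le_trans; apply.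
by rewrite [leLHS]addrC lerD2l ler_wdiv2l ?ql1norm_ge0 ?xiT_gt0.
Qed.

Section Horizon.
Variable t : R.
Hypotheses (t_gt0 : 0 < t) (t_lt_cap : t < hT_cap)
  (qx_small : q * l1norm x < eta * t / 8) (hx_small : h x <= t / 8).

Lemma peak_gain_ge : eta * (t - t / 8) <= X x * (t - h x).
Proof.
by apply: ler_pM; [exact: ltW | have := t_gt0; lra | done | have := hx_small; lra].
Qed.

Lemma reachable_in_ball z : L z -> h z <= t -> l1norm z < Rad.
Proof.
move=> Lz hz; rewrite ltNge; apply/negP => Rz.
have := le_trans (hT_cap_le_ball_bound Rz) (ball_bound_le_hT z Lz).
by have := t_lt_cap; lra.
Qed.

Lemma reachable_dichotomy z : L z -> h z <= t ->
  q * l1norm (fun i => z i - x i) / X x + h x <= h z \/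
  q * l1norm z / (eta / 2) <= h z.
Proof.
move=> Lz hz; have := peak_bound_le_hT z Lz.
rewrite /peak_bound !ge_min => /orP[/orP[]|] bound; [by left | by right |].
by have := t_lt_cap; lra.
Qed.

Lemma reachable_dist_le_gain z : L z -> h z <= t ->
  q * l1norm (fun i => z i - x i) <= X x * (t - h x).
Proof.
move=> Lz hz; have Xx_gt0 := xiT_gt0 x.
case: (reachable_dichotomy z Lz hz) => bound.
  by rewrite [X x * _]mulrC -ler_pdivrMr //; lra.
have eta2_gt0 : 0 < eta / 2 by rewrite divr_gt0.
have qz_le : q * l1norm z <= t * (eta / 2).
  by rewrite -ler_pdivrMr //; apply: le_trans bound hz.
have := qdist_triangle z origin x; rewrite l1norm_subr0 l1norm_sub0r.
have := peak_gain_ge; have := mulr_gt0 eta_gt0 t_gt0.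
by have := qx_small; lra.
Qed.

Lemma gain_lt_peak_gain y : L y -> y <> x -> h y < t ->
  X y * (t - h y) + q * l1norm (fun i => x i - y i) < X x * (t - h x).
Proof.
move=> Ly yx hy; have Xx_gt0 := xiT_gt0 x.
have Xy_le := xi_ball_le y Ly (reachable_in_ball y Ly (ltW hy)) yx.
have eta2_gt0 : 0 < eta / 2 by rewrite divr_gt0.
have gain_y_le : X y * (t - h y) <= eta / 2 * (t - h y).
  by rewrite ler_wpM2r // subr_ge0 ltW.
have := peak_gain_ge; have := mulr_gt0 eta_gt0 t_gt0.
case: (reachable_dichotomy y Ly (ltW hy)) => bound.
  have -> : q * l1norm (fun i => x i - y i) =
            X x * (q * l1norm (fun i => y i - x i) / X x).
    by rewrite l1norm_distC [X x * _]mulrC divfK ?gt_eqF.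
  move: (q * l1norm (fun i => y i - x i) / X x) bound => u bound.
  have : 0 < (X x - eta / 2) * (t - h y).
    by rewrite mulr_gt0 // subr_gt0; have := xi_x_ge; lra.
  have : 0 <= X x * (h y - h x - u).
    by apply: mulr_ge0; [exact: ltW | rewrite subr_ge0 lerBrDl addrC].
  lra.
have qy_le : q * l1norm y <= eta / 2 * h y.
  by rewrite [_ * h y]mulrC -ler_pdivrMr.
have := qdist_triangle x origin y; rewrite l1norm_subr0 l1norm_sub0r.
by have := qx_small; lra.
Qed.

Lemma mT_reachable z : L z -> h z <= t ->
  mT xi alpha T z t = X x * (t - h x) - q * l1norm (fun i => z i - x i).
Proof.
move=> Lz hz; have hx_le : 0 <= t - h x by have := t_gt0; have := hx_small; lra.
apply: sup_eq_max; first by exists x; rewrite (max_idPl hx_le).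
move=> _ [y [Ly ->]].
have [->|yx] := pselect (y = x); first by rewrite (max_idPl hx_le).
have [hy|ty] := ltP (h y) t.
  rewrite (max_idPl _); last by rewrite subr_ge0 ltW.
  have := gain_lt_peak_gain y Ly yx hy; have := qdist_triangle z y x.
  by rewrite (l1norm_distC y x); lra.
rewrite (max_idPr _) ?subr_le0 // mulr0.
have := reachable_dist_le_gain z Lz hz; have := ql1norm_ge0 (fun i => z i - y i).
lra.
Qed.

Lemma mT_lt_peak z : L z -> z <> x -> mT xi alpha T z t < mT xi alpha T x t.
Proof.
move=> Lz zx; have hx_lt : h x < t by have := t_gt0; have := hx_small; lra.
rewrite (mT_reachable x Lx (ltW hx_lt)) l1norm_distxx mulr0 subr0.
have [hz|hz] := leP (h z) t.
  by rewrite mT_reachable // ltrBlDr ltrDl mulr_gt0 ?l1norm_dist_gt0.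
by rewrite mT_eq0 // mulr_gt0 ?xiT_gt0 ?subr_gt0.
Qed.

Lemma mT_profile :
  (forall z, L z -> h z <= t ->
     mT xi alpha T z t = mT xi alpha T x t - q * l1norm (fun i => z i - x i) /\
     mT xi alpha T x t - q * l1norm (fun i => z i - x i)
       = X x * (t - h x) - q * l1norm (fun i => z i - x i)) /\
  (forall z, L z -> t < h z -> mT xi alpha T z t = 0) /\
  (forall z, L z -> z <> x -> mT xi alpha T z t < mT xi alpha T x t).
Proof.
have hx_le : h x <= t by have := t_gt0; have := hx_small; lra.
have mT_x : mT xi alpha T x t = X x * (t - h x).
  by rewrite (mT_reachable x Lx hx_le) l1norm_distxx mulr0 subr0.
split; [|split]; last exact: mT_lt_peak.
  by move=> z Lz hz; rewrite mT_x mT_reachable.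
by move=> z; exact: mT_eq0.
Qed.

End Horizon.
End IsolatedPeak.
End PathCost.

Theorem proposition8p1 (R : realType) (d : nat) (alpha : R)
  (hd : (0 < d)%N) (halpha : d%:R < alpha)
  (t kappa r eta Rad : R)
  (ht : 0 < t) (hkappa : 0 < kappa) (hr : 0 < r)
  (heta : 8 * qexp d alpha * r / t <= eta)
  (hR : Num.max (2 * eta * t / qexp d alpha) (3 * kappa) < Rad) :
  exists T0 : R, forall T : R, T0 < T ->
  forall (xi : ('I_d -> int) -> R), (forall z, 1 <= xi z) ->
  forall x : 'I_d -> R,
    (* (A) *)
    inLT alpha T x -> l1norm x < r ->
    eta <= xiT xi alpha T x -> xiT xi alpha T x < 2 * eta ->
    (* (B) *)
    (forall y, inLT alpha T y -> l1norm y < Rad -> y <> x ->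
       xiT xi alpha T y <= eta / 2) ->
    (* (C) *)
    (forall z, inLT alpha T z -> l1norm z < r -> hT xi alpha T z <= t / 8) ->
    (forall z, inLT alpha T z -> hT xi alpha T z <= t ->
       mT xi alpha T z t = mT xi alpha T x t - qexp d alpha * l1norm (fun i => z i - x i) /\
       mT xi alpha T x t - qexp d alpha * l1norm (fun i => z i - x i)
         = xiT xi alpha T x * (t - hT xi alpha T x) - qexp d alpha * l1norm (fun i => z i - x i)) /\
    (forall z, inLT alpha T z -> t < hT xi alpha T z -> mT xi alpha T z t = 0) /\
    (forall z, inLT alpha T z -> z <> x -> mT xi alpha T z t < mT xi alpha T x t).
Proof.
have q_gt0 : 0 < qexp d alpha by rewrite divr_gt0 ?ltr0n // subr_gt0.
have eta_gt0 : 0 < eta.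
  by apply: lt_le_trans heta; rewrite divr_gt0 // mulr_gt0 // mulr_gt0.
exists 1 => T T_gt1 xi xi_ge1 x Lx xr xi_x_ge xi_x_lt xi_ball_le hC.
have aT_gt0 : 0 < @aT R d alpha T.
  by rewrite powR_gt0 // divr_gt0 ?ln_gt0 // (lt_trans ltr01).
have t_lt_cap : t < hT_cap R d alpha eta Rad.
  move: hR; rewrite gt_max => /andP[+ _].
  by rewrite /hT_cap ltr_pdivlMr ?mulr_gt0 // ltr_pdivrMr //; lra.
have qx_small : qexp d alpha * l1norm x < eta * t / 8.
  have : qexp d alpha * l1norm x < qexp d alpha * r by rewrite ltr_pM2l.
  by move: heta; rewrite ler_pdivrMr //; lra.
exact: (mT_profile _ _ _ _ _ q_gt0 aT_gt0 xi_ge1 _ _ _ Lx eta_gt0 xi_x_ge xi_x_lt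
  xi_ball_le _ ht t_lt_cap qx_small (hC x Lx xr)).
Qed.
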